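(* Let $U=(E,\mathcal{D},\rho)$ be a U-matroid. If $A\in\mathcal{D}$ and $\rho(A)=|A|=\rho(E)$, then $A$ is a basis of $U$.
   Context: A U-matroid is a triple $(E,\mathcal{D},\rho)$ with $E$ finite, $\mathcal{D}\subseteq 2^E$ an accessible distributive lattice of sets, and $\rho:\mathcal{D}\to\mathbb{N}$ with $\rho(\emptyset)=0$, monotone, submodular, with unit increase. A basis of $U$ is the support of a vertex of the base polyhedron $\{\mathbf{x}\in\mathbb{R}^E:\mathbf{x}(A)\le\rho(A)\ \forall A\in\mathcal{D},\ \mathbf{x}(E)=\rho(E)\}$. *)

From HB Require Import structures.
From mathcomp Require Import all_boot all_order all_algebra.
From mathcomp Require Import reals.
Set Implicit Arguments. Unset Strict Implicit. Unset Printing Implicit Defensive.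
Import Order.TTheory GRing.Theory Num.Theory.

(* A U-matroid (E, D, rho): E is the finite type, D a family of subsets of E,
   rho : {set E} -> nat, of which only the values on D matter. *)

Definition set_lattice (E : finType) (D : {set {set E}}) : Prop :=
  [/\ set0 \in D, [set: E] \in D,
      (forall A B, A \in D -> B \in D -> A :|: B \in D) &
      (forall A B, A \in D -> B \in D -> A :&: B \in D)].

Definition accessible (E : finType) (D : {set {set E}}) : Prop :=
  forall A, A \in D -> A != set0 -> exists2 a, a \in A & A :\ a \in D.

Definition is_Umatroid (E : finType) (D : {set {set E}}) (rho : {set E} -> nat)
  : Prop :=
  [/\ set_lattice D /\ accessible D,
      rho set0 = 0%N,
      (forall A B, A \in D -> B \in D -> A \subset B -> (rho A <= rho B)%N),
      (forall A B, A \in D -> B \in D ->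
         (rho (A :|: B) + rho (A :&: B) <= rho A + rho B)%N) &
      (forall A B, A \in D -> B \in D -> A \subset B -> #|B :\: A| = 1%N ->
         (rho B <= (rho A).+1)%N)].

Local Open Scope ring_scope.

Definition xsum (R : realType) (E : finType) (x : E -> R) (A : {set E}) : R :=
  \sum_(e in A) x e.

Definition base_polyhedron (R : realType) (E : finType) (D : {set {set E}})
  (rho : {set E} -> nat) (x : E -> R) : Prop :=
  (forall A, A \in D -> xsum x A <= (rho A)%:R) /\ xsum x [set: E] = (rho [set: E])%:R.

Definition is_vertex (R : realType) (E : finType) (P : (E -> R) -> Prop)
  (x : E -> R) : Prop :=
  P x /\ forall y z t, P y -> P z -> 0 < t -> t < 1 ->
      (forall e, x e = t * y e + (1 - t) * z e) -> (forall e, y e = z e).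

Definition support (R : realType) (E : finType) (x : E -> R) : {set E} :=
  [set e | x e != 0].

Definition is_basis (R : realType) (E : finType) (D : {set {set E}})
  (rho : {set E} -> nat) (B : {set E}) : Prop :=
  exists x : E -> R, is_vertex (base_polyhedron D rho) x /\ support x = B.

From Pilot Require Import Defs.
From HB Require Import structures.
From mathcomp Require Import all_boot all_order all_algebra.
From mathcomp Require Import reals.
From mathcomp Require Import ring lra.
Set Implicit Arguments. Unset Strict Implicit. Unset Printing Implicit Defensive.
Import Order.TTheory GRing.Theory Num.Theory.

(* Let x be the indicator vector of A.  Accessibility and unit increase give
   rho(C u B) <= rho(C) + |B \ C|, so every C in D inside A has rho(C) = |C|;
   hence x(B) = |A n B| = rho(A n B) <= rho(B), and x lies in the base
   polyhedron, with the members of D below or above A as tight sets.  If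
   x = t y + (1 - t) z inside the polyhedron, then y and z agree with x on every
   tight set.  By accessibility each e lies in some C in D with C \ e in D;
   meeting C with A (if e is in A) or joining it with A (if not) gives tight
   sets B and B \ e, whose difference pins down y(e) = x(e) = z(e). *)

Lemma accessible_removable (E : finType) (D : {set {set E}}) :
  accessible D -> [set: E] \in D ->
  forall e, exists C, [/\ C \in D, e \in C & C :\ e \in D].
Proof.
move=> Dacc TD e.
suff: forall C, C \in D -> e \in C -> exists C, [/\ C \in D, e \in C & C :\ e \in D].
  by move/(_ _ TD); rewrite inE; apply.
move=> C; have [n ltCn] := ubnP #|C|; elim: n => // n IH in C ltCn *.
move=> CD eC.
have [a aC CaD] := Dacc C CD (introT (set0Pn C) (ex_intro _ e eC)).
have [<-|ae] := eqVneq a e; first by exists C.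
apply: (IH (C :\ a)) => //; last by rewrite !inE eq_sym ae.
by rewrite (cardsD1 a C) aC in ltCn.
Qed.

Section UMatroidRank.
Variables (E : finType) (D : {set {set E}}) (rho : {set E} -> nat).
Hypothesis HU : is_Umatroid D rho.

Lemma rho_setU1_le b C :
  C \in D -> b |: C \in D -> rho (b |: C) <= rho C + (b \notin C).
Proof.
case: HU => _ _ _ _ uinc CD bCD.
have [bC|bNC] := boolP (b \in C); first by rewrite (setUidPr _) ?sub1set ?addn0.
rewrite addn1; apply: uinc => //; first exact: subsetUr.
by rewrite cardsD (setIidPr (subsetUr _ _)) cardsU1 bNC addnK.
Qed.

Lemma rho_setU_le B C : B \in D -> C \in D -> rho (C :|: B) <= rho C + #|B :\: C|.
Proof.
case: (HU) => [[[_ _ DU _] Dacc] _ _ _ _].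
have [n ltBn] := ubnP #|B|; elim: n => // n IH in B ltBn *.
move=> BD CD; have [->|BN0] := eqVneq B set0; first by rewrite setU0 leq_addr.
have [b bB BbD] := Dacc B BD BN0.
have ltBbn : #|B :\ b| < n by rewrite (cardsD1 b B) bB in ltBn.
have CBbD : C :|: B :\ b \in D by exact: DU.
have -> : C :|: B = b |: (C :|: B :\ b) by rewrite setUCA setD1K.
have bNCBb : (b \notin C :|: B :\ b) = (b \notin C) by rewrite !inE eqxx /= orbF.
have cardBC : #|B :\: C| = (b \notin C) + #|B :\ b :\: C|.
  by rewrite (cardsD1 b (B :\: C)) !inE bB andbT setDDl setDDl setUC.
have bCBbD : b |: (C :|: B :\ b) \in D by rewrite setUCA setD1K ?DU.
apply: leq_trans (rho_setU1_le CBbD bCBbD) _.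
by rewrite bNCBb cardBC addnCA addnC leq_add2l IH.
Qed.

Lemma rho_le_card C : C \in D -> rho C <= #|C|.
Proof.
case: (HU) => [[[D0 _ _ _] _] r0 _ _ _] CD.
by have := rho_setU_le CD D0; rewrite set0U r0 setD0.
Qed.

Lemma rho_card_subset A C : A \in D -> rho A = #|A| -> C \in D -> C \subset A ->
  rho C = #|C|.
Proof.
move=> AD rA CD CA; apply/eqP; rewrite eqn_leq rho_le_card //=.
have := rho_setU_le AD CD; rewrite (setUidPr CA) rA cardsD (setIidPr CA) => le_rhoC.
by rewrite -(leq_add2r (#|A| - #|C|)) subnKC // subset_leq_card.
Qed.

End UMatroidRank.

Local Open Scope ring_scope.

Lemma eq_bound_of_convex_comb (R : realFieldType) (a b c t : R) :
  a <= c -> b <= c -> 0 < t -> t < 1 -> c = t * a + (1 - t) * b -> a = c.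
Proof. by move=> ac bc t0 t1 ce; nra. Qed.

Section BasePolyhedron.
Variables (R : realType) (E : finType) (D : {set {set E}}) (rho : {set E} -> nat).

Definition tight (x : E -> R) (B : {set E}) := xsum x B = (rho B)%:R.

Lemma xsum_convex_comb (x y z : E -> R) t B :
  (forall e, x e = t * y e + (1 - t) * z e) ->
  xsum x B = t * xsum y B + (1 - t) * xsum z B.
Proof.
by move=> hx; rewrite /xsum (eq_bigr _ (fun e _ => hx e)) big_split -!mulr_sumr.
Qed.

Lemma tight_convex_comb (x y z : E -> R) t B :
  base_polyhedron D rho y -> base_polyhedron D rho z -> 0 < t -> t < 1 ->
  (forall e, x e = t * y e + (1 - t) * z e) ->
  B \in D -> tight x B -> xsum y B = xsum x B.
Proof.
move=> [Py _] [Pz _] t0 t1 hx BD tB; rewrite tB.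
apply: (eq_bound_of_convex_comb (Py B BD) (Pz B BD) t0 t1).
by rewrite -tB; exact: xsum_convex_comb.
Qed.

Lemma vertex_of_tight_pairs (x : E -> R) :
  base_polyhedron D rho x ->
  (forall e, exists B,
     [/\ B \in D, B :\ e \in D, e \in B, tight x B & tight x (B :\ e)]) ->
  is_vertex (base_polyhedron D rho) x.
Proof.
move=> Px pairs; split=> // y z t Py Pz t0 t1 hx.
have coord_eq y' z' t' : base_polyhedron D rho y' -> base_polyhedron D rho z' ->
    0 < t' -> t' < 1 -> (forall e, x e = t' * y' e + (1 - t') * z' e) ->
    forall e, y' e = x e.
  move=> Py' Pz' t'0 t'1 hx' e; have [B [BD BeD eB tB tBe]] := pairs e.
  have := tight_convex_comb Py' Pz' t'0 t'1 hx' BD tB.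
  have := tight_convex_comb Py' Pz' t'0 t'1 hx' BeD tBe.
  by rewrite /xsum !(big_setD1 e eB) => -> /addIr.
have yx := coord_eq y z t Py Pz t0 t1 hx.
have zx : forall e, z e = x e.
  apply: (coord_eq z y (1 - t)) => //; rewrite ?subr_gt0 ?gtrBl //.
  by move=> e; rewrite hx; ring.
by move=> e; rewrite yx zx.
Qed.

End BasePolyhedron.

Section IndicatorVertex.
Variables (R : realType) (E : finType) (D : {set {set E}}) (rho : {set E} -> nat).
Variable A : {set E}.

Definition indicator : E -> R := fun e => ((e \in A) : nat)%:R.

Lemma xsum_indicator B : xsum indicator B = #|A :&: B|%:R.
Proof.
rewrite /xsum /indicator -natr_sum -big_mkcondr /= sum1_card.
by congr (_%:R); apply: eq_card => e; rewrite !inE andbC.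
Qed.

(* Unqualified, [support] is ssralg's notation for [0.-support]. *)
Lemma support_indicator : Defs.support indicator = A.
Proof.
by apply/setP=> e; rewrite inE /indicator; case: (e \in A); rewrite ?oner_eq0 ?eqxx.
Qed.

Hypotheses (HU : is_Umatroid D rho) (AD : A \in D).
Hypotheses (rhoA : rho A = #|A|) (rhoT : #|A| = rho [set: E]).

Lemma indicator_tight_subset B : B \in D -> B \subset A -> tight rho indicator B.
Proof.
by move=> BD BA; rewrite /tight xsum_indicator (setIidPr BA) (rho_card_subset HU AD).
Qed.

Lemma indicator_tight_superset B : B \in D -> A \subset B -> tight rho indicator B.
Proof.
case: HU => [[[_ TD _ _] _] _ mono _ _] BD AB.
rewrite /tight xsum_indicator (setIidPl AB); congr (_%:R); apply/eqP.
by rewrite eqn_leq -{1}rhoA mono //= rhoT mono ?subsetT.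
Qed.

Lemma indicator_in_base_polyhedron : base_polyhedron D rho indicator.
Proof.
case: HU => [[[_ _ _ DI] _] _ mono _ _].
split; last by rewrite xsum_indicator setIT rhoT.
move=> B BD; rewrite xsum_indicator ler_nat.
rewrite -(rho_card_subset HU AD rhoA (DI _ _ AD BD) (subsetIl _ _)).
by rewrite mono ?DI ?subsetIr.
Qed.

Lemma indicator_tight_pairs e : exists B,
  [/\ B \in D, B :\ e \in D, e \in B, tight rho indicator B & tight rho indicator (B :\ e)].
Proof.
case: HU => [[[_ TD DU DI] Dacc] _ _ _ _].
have [C [CD eC CeD]] := accessible_removable Dacc TD e.
have [eA|eNA] := boolP (e \in A).
  have ACD : A :&: C \in D by exact: DI.
  have ACeD : (A :&: C) :\ e \in D by rewrite -setIDA DI.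
  exists (A :&: C); split; rewrite ?inE ?eA ?eC //.
    exact: indicator_tight_subset (subsetIl _ _).
  apply: indicator_tight_subset => //.
  exact: subset_trans (subsetDl _ _) (subsetIl _ _).
have ACD : A :|: C \in D by exact: DU.
have ACe : (A :|: C) :\ e = A :|: C :\ e.
  by apply/setP=> f; rewrite !inE; case: eqVneq => // ->; rewrite (negPf eNA).
exists (A :|: C); split; rewrite ?ACe ?inE ?eC ?orbT ?DU //.
  exact: indicator_tight_superset (subsetUl _ _).
by apply: indicator_tight_superset; rewrite ?DU ?subsetUl.
Qed.

End IndicatorVertex.

Theorem corollary3p7 (R : realType) (E : finType) (D : {set {set E}})
  (rho : {set E} -> nat) (A : {set E}) :
  is_Umatroid D rho -> A \in D ->
  rho A = #|A| -> #|A| = rho [set: E] ->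
  is_basis R D rho A.
Proof.
move=> HU AD rhoA rhoT; exists (indicator R A); split; last exact: support_indicator.
apply: vertex_of_tight_pairs; first exact: indicator_in_base_polyhedron.
exact: indicator_tight_pairs.
Qed.
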